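(* Let $V$ be a finite set, $C$ a partition of $V$, $k>0$, and let $G=(V,E)$ be the clique graph of $C$ with edge weight $k$. Then for every nonempty $d\subseteq V$, $\frac{w_d}{v_d}\le f_C(d)$.
   Context: The clique graph of a partition $C$ of $V$ with edge weight $k$ is $G=(V,E)$ with $E(i,j)=k$ if $i$ and $j$ lie in the same block of $C$ (including $i=j$) and $E(i,j)=0$ otherwise. For $d\subseteq V$: $v_d=\sum_{i\in d}\sum_{j\in V}E(i,j)$ and $w_d=\sum_{i,j\in d}E(i,j)$. Further $f_C(d)=\max_{c\in C}\frac{|c\cap d|}{|c|}$. *)

From mathcomp Require Import all_boot all_order all_algebra.
Set Implicit Arguments. Unset Strict Implicit. Unset Printing Implicit Defensive.
Import Order.TTheory GRing.Theory Num.Theory.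
Local Open Scope ring_scope.

Definition clique_weight (R : numDomainType) (V : finType) (C : {set {set V}})
  (k : R) (i j : V) : R :=
  if [exists c in C, (i \in c) && (j \in c)] then k else 0.

Definition vol (R : numDomainType) (V : finType) (C : {set {set V}}) (k : R)
  (d : {set V}) : R :=
  \sum_(i in d) \sum_(j : V) clique_weight C k i j.

Definition wgt (R : numDomainType) (V : finType) (C : {set {set V}}) (k : R)
  (d : {set V}) : R :=
  \sum_(i in d) \sum_(j in d) clique_weight C k i j.

(* f_C(d) = max_{c in C} |c ∩ d| / |c|  (blocks of a partition are nonempty;
   the max over C uses bottom 0, harmless since all ratios are >= 0) *)
Definition fC (R : realFieldType) (V : finType) (C : {set {set V}})
  (d : {set V}) : R :=
  \big[Num.max/0]_(c in C) (#|c :&: d|%:R / #|c|%:R).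

Arguments clique_weight {R V} C k i j.
Arguments vol {R V} C k d.
Arguments wgt {R V} C k d.
Arguments fC {R V} C d.

From mathcomp Require Import all_boot all_order all_algebra.
Import Order.TTheory GRing.Theory Num.Theory.
Set Implicit Arguments.
Unset Strict Implicit.
Local Open Scope ring_scope.

(* In the clique graph a vertex i of d contributes k |[i]| to v_d and
   k |[i] ∩ d| to w_d, where [i] is the block of i; the latter is at most
   f_C(d) times the former, and summing over i in d gives w_d <= f_C(d) v_d. *)

Section CliqueGraph.

Variables (R : numDomainType) (V : finType) (C : {set {set V}}) (k : R).
Hypothesis partC : partition C [set: V].

Lemma pblock_partition_mem (i : V) : pblock C i \in C.
Proof. by case/and3P: partC => /eqP covC _ _; rewrite pblock_mem // covC inE. Qed.

Lemma mem_pblock_partition (i : V) : i \in pblock C i.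
Proof. by case/and3P: partC => /eqP covC _ _; rewrite mem_pblock covC inE. Qed.

Lemma clique_weightE (i j : V) :
  clique_weight C k i j = if j \in pblock C i then k else 0.
Proof.
case/and3P: partC => _ trivC _; rewrite /clique_weight.
case: existsP => [[c /and3P [cC ic jc]] | noc].
  by rewrite (def_pblock trivC cC ic) jc.
case: ifP => // jPi; case: noc; exists (pblock C i).
by rewrite pblock_partition_mem mem_pblock_partition jPi.
Qed.

Lemma sum_clique_weight (i : V) (A : {set V}) :
  \sum_(j in A) clique_weight C k i j = #|pblock C i :&: A|%:R * k.
Proof.
under eq_bigr do rewrite clique_weightE.
rewrite -big_mkcondr /= sumr_const mulr_natl.
by congr (_ *+ _); apply: eq_card => j; rewrite !inE andbC.
Qed.

Lemma vol_partition (d : {set V}) :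
  vol C k d = \sum_(i in d) #|pblock C i|%:R * k.
Proof.
apply: eq_bigr => i _; rewrite -(setIT (pblock C i)) -sum_clique_weight.
by apply: eq_bigl => j; rewrite inE.
Qed.

Lemma wgt_partition (d : {set V}) :
  wgt C k d = \sum_(i in d) #|pblock C i :&: d|%:R * k.
Proof. by apply: eq_bigr => i _; rewrite sum_clique_weight. Qed.

Lemma vol_gt0 (d : {set V}) : 0 < k -> d != set0 -> 0 < vol C k d.
Proof.
move=> k_gt0 /set0Pn [x xd]; rewrite vol_partition (bigD1 x) //= ltr_pwDl //.
  by rewrite mulr_gt0 // ltr0n; apply/card_gt0P; exists x; apply: mem_pblock_partition.
by apply: sumr_ge0 => i _; rewrite mulr_ge0 // ltW.
Qed.

End CliqueGraph.

Lemma card_setI_le_fC (R : realFieldType) (V : finType) (C : {set {set V}})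
  (d c : {set V}) : c \in C -> c != set0 -> #|c :&: d|%:R <= fC C d * #|c|%:R :> R.
Proof.
move=> cC /set0Pn/card_gt0P c_gt0; rewrite -ler_pdivrMr ?ltr0n //.
by rewrite /fC (bigD1 c) //= le_max lexx.
Qed.

Theorem lemma1 (R : realFieldType) (V : finType) (C : {set {set V}}) (k : R)
  (hC : partition C [set: V]) (hk : 0 < k) (d : {set V}) (hd : d != set0) :
  wgt C k d / vol C k d <= fC C d.
Proof.
rewrite ler_pdivrMr ?vol_gt0 // (wgt_partition k hC) (vol_partition k hC).
rewrite mulr_sumr; apply: ler_sum => i _; rewrite mulrA ler_pM2r //.
apply: card_setI_le_fC; first exact: pblock_partition_mem.
by apply/set0Pn; exists i; apply: mem_pblock_partition.
Qed.
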